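(* For each $i\in\{1,\dots,n\}$ let $D_i\in\mathbb{R}^{d\times m}$, let $\Gamma_i\in\mathbb{R}^{m\times m}$ be diagonal with entries in $\{0,1\}$, and let a linear basis warp $(\beta_i,Z_i,\mu_i)$ with $\mu_i\ge0$ be given, with $\mathcal{B}_i=\mathcal{B}_i(D_i)$ and $M_i=\mathcal{B}_i\Gamma_i\Gamma_i\mathcal{B}_i^{\top}+\mu_iZ_i^{\top}Z_i$ invertible. Let $P_i=\Gamma_i-\Gamma_i\mathcal{B}_i^{\top}M_i^{-1}\mathcal{B}_i\Gamma_i$ and $\mathcal{P}_{III}=\sum_iP_i$. If every warp contains free-translations, then $\mathcal{P}_{III}\mathbf{1}=0$, $P_i\mathbf{1}=0$ for all $i$, and for every $i$ there exists $x_i$ with $\Gamma_i\mathcal{B}_i^{\top}x_i=\Gamma_i\mathbf{1}$ and, if $\mu_i>0$, $Z_ix_i=0$. In particular these conclusions hold whenever each warp is the affine transformation ($\beta(p)=[p^{\top},1]^{\top}$, $\mu_i=0$) or a TPS warp.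
   Context: A linear basis warp (LBW) $(\beta,Z,\mu)$ with feature map $\beta:\mathbb{R}^d\to\mathbb{R}^l$ is the map $p\mapsto W^{\top}\beta(p)$, $W\in\mathbb{R}^{l\times d}$, regularized by $\mu\|ZW\|_F^2$; for $D=[p_1,\dots,p_m]$, $\mathcal{B}(D)=[\beta(p_1),\dots,\beta(p_m)]$. It contains free-translations if there is $x\in\mathbb{R}^l$ with $\beta(p)^{\top}x=1$ for all $p\in\mathbb{R}^d$ and, if $\mu>0$, $Zx=0$. TPS warp ($d\in\{2,3\}$): control centers $c_1,\dots,c_l\in\mathbb{R}^d$, parameter $\lambda$, kernel $\phi(r)=r^2\log(r^2)$ ($d=2$) or $\phi(r)=-|r|$ ($d=3$); $K_\lambda\in\mathbb{R}^{l\times l}$ with diagonal $\lambda$ and $(K_\lambda)_{jk}=\phi(\|c_j-c_k\|)$ off the diagonal; $\tilde{C}=[\tilde{c}_1,\dots,\tilde{c}_l]$, $\tilde{c}_j=[c_j^{\top},1]^{\top}$; $K_\lambda$ and $\tilde{C}K_\lambda^{-1}\tilde{C}^{\top}$ assumed invertible; $\bar{\mathcal{E}}_\lambda=K_\lambda^{-1}-K_\lambda^{-1}\tilde{C}^{\top}(\tilde{C}K_\lambda^{-1}\tilde{C}^{\top})^{-1}\tilde{C}K_\lambda^{-1}$ (bending energy matrix, positive semidefinite in the paper's setting); $\mathcal{E}_\lambda=\begin{bmatrix}\bar{\mathcal{E}}_\lambda\\ (\tilde{C}K_\lambda^{-1}\tilde{C}^{\top})^{-1}\tilde{C}K_\lambda^{-1}\end{bmatrix}$;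 $\beta(p)=\mathcal{E}_\lambda^{\top}\begin{bmatrix}\phi_p\\ \tilde{p}\end{bmatrix}$ with $\phi_p=[\phi(\|p-c_j\|)]_{j=1}^l$, $\tilde{p}=[p^{\top},1]^{\top}$; $Z=\sqrt{\bar{\mathcal{E}}_\lambda}$ (symmetric PSD square root), $\mu\ge0$. $\mathbf{1}\in\mathbb{R}^m$ is the all-ones vector. *)

From HB Require Import structures.
From mathcomp Require Import all_boot all_order all_algebra.
From mathcomp Require Import reals exp.
Set Implicit Arguments. Unset Strict Implicit. Unset Printing Implicit Defensive.
Import Order.TTheory GRing.Theory Num.Theory.
Local Open Scope ring_scope.

Record LBW (R : realType) (d l k : nat) := MkLBW {
  lbw_beta : 'cV[R]_d -> 'cV[R]_l;
  lbw_Z : 'M[R]_(k, l);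
  lbw_mu : R }.

Definition Bmat (R : realType) (d l m : nat) (beta : 'cV[R]_d -> 'cV[R]_l)
  (D : 'M[R]_(d, m)) : 'M[R]_(l, m) :=
  \matrix_(a < l, j < m) beta (col j D) a 0.

Definition ones (R : realType) (n : nat) : 'cV[R]_n := const_mx 1.

Definition free_translations (R : realType) (d l k : nat) (W : LBW R d l k) :=
  exists x : 'cV[R]_l,
    (forall p : 'cV[R]_d, (lbw_beta W p)^T *m x = 1%:M) /\
    (0 < lbw_mu W -> lbw_Z W *m x = 0).

Definition diag01 (R : realType) (m : nat) (G : 'M[R]_m) :=
  (forall a b : 'I_m, a != b -> G a b = 0) /\
  (forall a : 'I_m, G a a = 0 \/ G a a = 1).

Definition is_affine (R : realType) (d l k : nat) (W : LBW R d l k) :=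
  lbw_mu W = 0 /\
  exists e : (d + 1)%N = l,
    forall p : 'cV[R]_d,
      lbw_beta W p = castmx (e, erefl 1%N) (col_mx p (ones R 1)).

Definition enorm (R : realType) (d : nat) (v : 'cV[R]_d) : R :=
  Num.sqrt (\sum_(a < d) v a 0 ^+ 2).

Definition tps_kernel (R : realType) (d : nat) (r : R) : R :=
  if d == 2%N then r ^+ 2 * ln (r ^+ 2) else - `|r|.

Definition tilde (R : realType) (d : nat) (p : 'cV[R]_d) : 'cV[R]_(d + 1) :=
  col_mx p (ones R 1).

Definition tps_K (R : realType) (d l : nat) (c : 'I_l -> 'cV[R]_d) (lam : R)
  : 'M[R]_l :=
  \matrix_(j < l, k < l)
    if j == k then lam else tps_kernel d (enorm (c j - c k)).

Definition tps_C (R : realType) (d l : nat) (c : 'I_l -> 'cV[R]_d)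
  : 'M[R]_(d + 1, l) :=
  \matrix_(a < d + 1, j < l) tilde (c j) a 0.

Definition tps_Ebar (R : realType) (d l : nat) (c : 'I_l -> 'cV[R]_d) (lam : R)
  : 'M[R]_l :=
  let K := tps_K c lam in
  let C := tps_C c in
  invmx K - invmx K *m C^T *m invmx (C *m invmx K *m C^T) *m C *m invmx K.

Definition tps_E (R : realType) (d l : nat) (c : 'I_l -> 'cV[R]_d) (lam : R)
  : 'M[R]_(l + (d + 1), l) :=
  let K := tps_K c lam in
  let C := tps_C c in
  col_mx (tps_Ebar c lam) (invmx (C *m invmx K *m C^T) *m C *m invmx K).

Definition tps_phivec (R : realType) (d l : nat) (c : 'I_l -> 'cV[R]_d)
  (p : 'cV[R]_d) : 'cV[R]_l :=
  \col_(j < l) tps_kernel d (enorm (p - c j)).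

Definition tps_beta (R : realType) (d l : nat) (c : 'I_l -> 'cV[R]_d) (lam : R)
  (p : 'cV[R]_d) : 'cV[R]_l :=
  (tps_E c lam)^T *m col_mx (tps_phivec c p) (tilde p).

Definition is_TPS (R : realType) (d l k : nat) (W : LBW R d l k) :=
  (d = 2%N \/ d = 3%N) /\ 0 <= lbw_mu W /\
  exists (c : 'I_l -> 'cV[R]_d) (lam : R) (e : k = l),
    [/\ tps_K c lam \in unitmx,
        tps_C c *m invmx (tps_K c lam) *m (tps_C c)^T \in unitmx,
        (forall p, lbw_beta W p = tps_beta c lam p) &
     [/\
        (castmx (e, erefl l) (lbw_Z W))^T = castmx (e, erefl l) (lbw_Z W),
        (forall v : 'cV[R]_l,
            0 <= (v^T *m castmx (e, erefl l) (lbw_Z W) *m v) 0 0) &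
        castmx (e, erefl l) (lbw_Z W) *m castmx (e, erefl l) (lbw_Z W)
          = tps_Ebar c lam]].

Definition Mmat (R : realType) (d l k m : nat) (W : LBW R d l k)
  (D : 'M[R]_(d, m)) (G : 'M[R]_m) : 'M[R]_l :=
  let B := Bmat (lbw_beta W) D in
  B *m G *m G *m B^T + lbw_mu W *: ((lbw_Z W)^T *m lbw_Z W).

Definition Pmat (R : realType) (d l k m : nat) (W : LBW R d l k)
  (D : 'M[R]_(d, m)) (G : 'M[R]_m) : 'M[R]_m :=
  let B := Bmat (lbw_beta W) D in
  G - G *m B^T *m invmx (Mmat W D G) *m B *m G.

From HB Require Import structures.
From mathcomp Require Import all_boot all_order all_algebra.
From mathcomp Require Import reals exp.
Import Order.TTheory GRing.Theory Num.Theory.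
Local Open Scope ring_scope.
Set Implicit Arguments. Unset Strict Implicit.

(* A free-translation vector x gives B^T x = 1 and mu Z x = 0, so
   M x = B Gamma Gamma 1 = B Gamma 1 because Gamma is idempotent; hence
   Gamma B^T M^-1 B Gamma 1 = Gamma B^T x = Gamma 1 and P 1 = 0.
   The affine warp has the free translation e_(d+1).  For a TPS warp take
   x = C^T e_(d+1): Ebar C^T = 0 gives E C^T = [0; I], so
   beta(p)^T x = tilde(p)^T e_(d+1) = 1, and |Z x|^2 = x^T Ebar x = 0. *)

Lemma diag01_mulmx_idem (R : realType) m (G : 'M[R]_m) : diag01 G -> G *m G = G.
Proof.
case=> Goff Gdiag; apply/matrixP=> a b; rewrite mxE (bigD1 a) //= big1 ?addr0.
  have [->|ab] := eqVneq a b; last by rewrite (Goff _ _ ab) mulr0.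
  by case: (Gdiag b) => ->; rewrite ?mulr0 ?mulr1.
by move=> c ca; rewrite Goff ?mul0r // eq_sym.
Qed.

Lemma trmx_Bmat_mul_translation (R : realType) d l m
    (beta : 'cV[R]_d -> 'cV[R]_l) (D : 'M[R]_(d, m)) (x : 'cV[R]_l) :
  (forall p, (beta p)^T *m x = 1%:M) -> (Bmat beta D)^T *m x = ones R m.
Proof.
move=> beta_x; apply/matrixP=> j z; rewrite (ord1 z) !mxE.
have /matrixP /(_ 0 0) := beta_x (col j D); rewrite !mxE => beta_j_x.
by rewrite -[RHS]beta_j_x; apply: eq_bigr => a _; rewrite !mxE.
Qed.

Section FreeTranslation.

Variables (R : realType) (d l k m : nat) (W : LBW R d l k).
Variables (D : 'M[R]_(d, m)) (G : 'M[R]_m) (x : 'cV[R]_l).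
Hypothesis G01 : diag01 G.
Hypothesis mu_ge0 : 0 <= lbw_mu W.
Hypothesis beta_x : forall p, (lbw_beta W p)^T *m x = 1%:M.
Hypothesis Z_x : 0 < lbw_mu W -> lbw_Z W *m x = 0.

Let B := Bmat (lbw_beta W) D.

Lemma Gamma_trBmat_translation : G *m B^T *m x = G *m ones R m.
Proof. by rewrite -mulmxA trmx_Bmat_mul_translation. Qed.

Lemma Mmat_mul_translation : Mmat W D G *m x = B *m G *m ones R m.
Proof.
have mu_Z_x : lbw_mu W *: ((lbw_Z W)^T *m lbw_Z W *m x) = 0.
  have [mu_gt0|mu_le0] := ltrP 0 (lbw_mu W).
    by rewrite -mulmxA Z_x // mulmx0 scaler0.
  by rewrite (@le_anti _ _ (lbw_mu W) 0) ?mu_le0 ?mu_ge0 // scale0r.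
rewrite /Mmat mulmxDl -scalemxAl mu_Z_x addr0 -/B.
by rewrite -mulmxA trmx_Bmat_mul_translation // -(mulmxA B G G) diag01_mulmx_idem.
Qed.

Lemma Pmat_mul_ones : Mmat W D G \in unitmx -> Pmat W D G *m ones R m = 0.
Proof.
move=> M_unit.
have inv_M_ones : invmx (Mmat W D G) *m (B *m G *m ones R m) = x.
  by rewrite -Mmat_mul_translation mulKmx.
rewrite /Pmat -/B mulmxBl -{1}Gamma_trBmat_translation -{1}inv_M_ones.
by rewrite !mulmxA subrr.
Qed.

End FreeTranslation.

Lemma tr_col_mx_ones_mul_last (R : realType) d (p : 'cV[R]_d) :
  (col_mx p (ones R 1))^T *m col_mx 0 (ones R 1) = 1%:M.
Proof.
rewrite tr_col_mx mul_row_col mulmx0 add0r.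
by apply/matrixP=> a b; rewrite (ord1 a) (ord1 b) !mxE big_ord1 !mxE mulr1.
Qed.

Lemma affine_free_translations (R : realType) d l k (W : LBW R d l k) :
  is_affine W -> free_translations W.
Proof.
case=> mu0 [e beta_affine].
exists (castmx (e, erefl 1%N) (col_mx 0 (ones R 1))); split; last by rewrite mu0 ltxx.
move=> p; rewrite beta_affine {beta_affine}; subst l.
by rewrite !castmx_id tr_col_mx_ones_mul_last.
Qed.

Lemma bending_energy_mul_trC (R : comUnitRingType) l q
    (K : 'M[R]_l) (C : 'M[R]_(q, l)) :
  C *m invmx K *m C^T \in unitmx ->
  (invmx K - invmx K *m C^T *m invmx (C *m invmx K *m C^T) *m C *m invmx K) *m C^T
    = 0.
Proof.
move=> A_unit; rewrite mulmxBl -!mulmxA [C *m (invmx K *m C^T)]mulmxA.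
by rewrite (mulVmx A_unit) mulmx1 subrr.
Qed.

Lemma trmx_mul_self_eq0 (R : realDomainType) n (w : 'cV[R]_n) :
  w^T *m w = 0 -> w = 0.
Proof.
move=> /matrixP /(_ 0 0); rewrite !mxE => sum_sq0.
have sq0 : forall i, i \in predT -> w i 0 * w i 0 = 0.
  apply/psumr_eq0P => [i _|]; first by rewrite -expr2 sqr_ge0.
  by rewrite -[RHS]sum_sq0; apply: eq_bigr => i _; rewrite !mxE.
apply/matrixP=> i j; rewrite (ord1 j) mxE.
by have /eqP := sq0 i isT; rewrite mulf_eq0 orbb => /eqP.
Qed.

Section ThinPlateSpline.

Variables (R : realType) (d l : nat) (c : 'I_l -> 'cV[R]_d) (lam : R).
Let K := tps_K c lam.
Let C := tps_C c.
Hypothesis A_unit : C *m invmx K *m C^T \in unitmx.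

Lemma tps_Ebar_mul_trC : tps_Ebar c lam *m C^T = 0.
Proof. exact: bending_energy_mul_trC. Qed.

Lemma tps_E_mul_trC : tps_E c lam *m C^T = col_mx 0 1%:M.
Proof.
rewrite /tps_E mul_col_mx tps_Ebar_mul_trC -!mulmxA.
by rewrite [C *m (invmx K *m C^T)]mulmxA (mulVmx A_unit).
Qed.

Definition tps_translation : 'cV[R]_l := C^T *m col_mx 0 (ones R 1).

Lemma tps_beta_mul_translation p : (tps_beta c lam p)^T *m tps_translation = 1%:M.
Proof.
rewrite /tps_beta trmx_mul trmxK -mulmxA (mulmxA _ C^T) tps_E_mul_trC.
rewrite mul_col_mx mul0mx mul1mx tr_col_mx mul_row_col mulmx0 add0r.
exact: tr_col_mx_ones_mul_last.
Qed.

Lemma sqrt_tps_Ebar_mul_translation (Z : 'M[R]_l) :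
  Z^T = Z -> Z *m Z = tps_Ebar c lam -> Z *m tps_translation = 0.
Proof.
move=> Z_sym ZZ; apply: trmx_mul_self_eq0.
rewrite trmx_mul Z_sym -mulmxA (mulmxA Z) ZZ /tps_translation.
by rewrite (mulmxA (tps_Ebar c lam)) tps_Ebar_mul_trC mul0mx mulmx0.
Qed.

End ThinPlateSpline.

Lemma tps_free_translations (R : realType) d l k (W : LBW R d l k) :
  is_TPS W -> free_translations W.
Proof.
case=> _ [_ [c [lam [e [_ A_unit beta_tps [Z_sym _ ZZ]]]]]].
exists (tps_translation c); split=> [p|_].
  by rewrite beta_tps tps_beta_mul_translation.
move: Z_sym ZZ; subst k; rewrite castmx_id.
exact: sqrt_tps_Ebar_mul_translation.
Qed.

Theorem proposition6 (R : realType) (n d m : nat) (l k : 'I_n -> nat)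
  (W : forall i : 'I_n, LBW R d (l i) (k i))
  (D : 'I_n -> 'M[R]_(d, m)) (G : 'I_n -> 'M[R]_m) :
  (forall i, diag01 (G i)) ->
  (forall i, 0 <= lbw_mu (W i)) ->
  (forall i, Mmat (W i) (D i) (G i) \in unitmx) ->
  (forall i, free_translations (W i) \/ is_affine (W i) \/ is_TPS (W i)) ->
  [/\ (\sum_(i < n) Pmat (W i) (D i) (G i)) *m ones R m = 0,
      (forall i, Pmat (W i) (D i) (G i) *m ones R m = 0) &
      (forall i, exists x : 'cV[R]_(l i),
          G i *m (Bmat (lbw_beta (W i)) (D i))^T *m x = G i *m ones R m /\
          (0 < lbw_mu (W i) -> lbw_Z (W i) *m x = 0))].
Proof.
move=> G01 mu_ge0 M_unit warp_kind.
have ft i : free_translations (W i).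
  by case: (warp_kind i) => [|[/affine_free_translations|/tps_free_translations]].
have P_ones i : Pmat (W i) (D i) (G i) *m ones R m = 0.
  by have [x [beta_x Z_x]] := ft i; exact: Pmat_mul_ones.
split=> [|//|i].
  by rewrite mulmx_suml big1.
have [x [beta_x Z_x]] := ft i.
by exists x; split=> //; exact: Gamma_trBmat_translation.
Qed.
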